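(* Let $k_1,k_2,b_1,b_2,b_3$ be non-zero constants with $b_1\neq b_2$, and let $$f(x,y)=k_1e^{\sqrt2[b_1x+(b_2-b_1)y]}+k_2e^{\frac{1}{\sqrt2}(b_1x+b_3y)}.$$ Consider the constrained system $\ddot x+\frac{f_{,x}}{f}\dot x^2=0$, $\ddot y+\frac{f_{,y}}{f}\dot y^2=0$, $f(x,y)\dot x\dot y=E_0\neq0$ (the non-null geodesics of the metric $\gamma_{12}=\gamma_{21}=f$, $\gamma_{11}=\gamma_{22}=0$). Then $$I_1=f(x,y)^2e^{-\sqrt2b_1x}\dot y^2+\frac{k_1b_1E_0}{b_1-b_2}e^{\sqrt2(b_2-b_1)y}$$ is a first integral of this constrained system.
   Context: A first integral of the constrained system is a function whose time derivative vanishes along every solution of the three displayed equations; the metric is considered where $f\neq0$. *)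

From Stdlib Require Import Reals.
From Coquelicot Require Import Coquelicot.
Open Scope R_scope.

Definition fmet (k1 k2 b1 b2 b3 : R) (x y : R) : R :=
  k1 * exp (sqrt 2 * (b1 * x + (b2 - b1) * y))
  + k2 * exp (/ sqrt 2 * (b1 * x + b3 * y)).

Definition fmet_x (k1 k2 b1 b2 b3 : R) (x y : R) : R :=
  Derive (fun u => fmet k1 k2 b1 b2 b3 u y) x.
Definition fmet_y (k1 k2 b1 b2 b3 : R) (x y : R) : R :=
  Derive (fun v => fmet k1 k2 b1 b2 b3 x v) y.

Definition I1 (k1 k2 b1 b2 b3 E0 : R) (x y xd yd : R) : R :=
  (fmet k1 k2 b1 b2 b3 x y) ^ 2 * exp (- (sqrt 2 * b1 * x)) * yd ^ 2
  + k1 * b1 * E0 / (b1 - b2) * exp (sqrt 2 * (b2 - b1) * y).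

From Stdlib Require Import Reals Lra.
From Coquelicot Require Import Coquelicot.
Open Scope R_scope.

(* Write I1 = W ydot^2 + C e^{sqrt2 (b2-b1) y} with W = f^2 e^{-sqrt2 b1 x}.
   Since W_y = 2 W f_y / f, the y-geodesic equation kills the W_y ydot^3
   terms, leaving W_x xdot ydot^2.  The k2 part of f drops out of
   W_x = f e^{-sqrt2 b1 x} (2 f_x - sqrt2 b1 f) = sqrt2 b1 k1 f e^{sqrt2 (b2-b1) y},
   so by the constraint f xdot ydot = E0 this equals sqrt2 b1 k1 E0 ydot
   e^{sqrt2 (b2-b1) y}, which is exactly cancelled by the derivative of the
   second term. *)

Section Metric.

Variables k1 k2 b1 b2 b3 : R.

Local Notation f := (fmet k1 k2 b1 b2 b3).
Local Notation f_x := (fmet_x k1 k2 b1 b2 b3).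
Local Notation f_y := (fmet_y k1 k2 b1 b2 b3).

Lemma fmet_x_eq X Y :
  f_x X Y = k1 * (sqrt 2 * b1) * exp (sqrt 2 * (b1 * X + (b2 - b1) * Y))
          + k2 * (/ sqrt 2 * b1) * exp (/ sqrt 2 * (b1 * X + b3 * Y)).
Proof. apply is_derive_unique; unfold fmet; auto_derive; [exact I | ring]. Qed.

Lemma fmet_y_eq X Y :
  f_y X Y = k1 * (sqrt 2 * (b2 - b1)) * exp (sqrt 2 * (b1 * X + (b2 - b1) * Y))
          + k2 * (/ sqrt 2 * b3) * exp (/ sqrt 2 * (b1 * X + b3 * Y)).
Proof. apply is_derive_unique; unfold fmet; auto_derive; [exact I | ring]. Qed.

(* Since [/ sqrt 2 = sqrt 2 / 2], the [k2] terms cancel. *)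
Lemma fmet_x_sub X Y :
  2 * f_x X Y - sqrt 2 * b1 * f X Y
  = sqrt 2 * b1 * k1 * exp (sqrt 2 * (b1 * X + (b2 - b1) * Y)).
Proof.
  assert (hs0 : sqrt 2 <> 0) by (apply Rgt_not_eq, sqrt_lt_R0; lra).
  assert (hinv : / sqrt 2 = sqrt 2 / 2).
  { rewrite <- (sqrt_sqrt 2) at 3 by lra. field. exact hs0. }
  rewrite fmet_x_eq. unfold fmet. rewrite hinv. field.
Qed.

Lemma is_derive_weight_comp (x y : R -> R) t :
  ex_derive x t -> ex_derive y t ->
  is_derive (fun s => f (x s) (y s) ^ 2 * exp (- (sqrt 2 * b1 * x s))) t
    (exp (- (sqrt 2 * b1 * x t)) * f (x t) (y t)
     * ((2 * f_x (x t) (y t) - sqrt 2 * b1 * f (x t) (y t)) * Derive x t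
        + 2 * f_y (x t) (y t) * Derive y t)).
Proof.
  intros hx hy. rewrite fmet_x_eq, fmet_y_eq. unfold fmet.
  auto_derive; [tauto |].
  change (fun s => x s) with x; change (fun s => y s) with y. ring.
Qed.

Lemma is_derive_I1_comp (E0 : R) (x y : R -> R) t :
  b1 <> b2 -> f (x t) (y t) <> 0 ->
  ex_derive x t -> ex_derive y t -> ex_derive (Derive y) t ->
  Derive (Derive y) t + f_y (x t) (y t) / f (x t) (y t) * Derive y t ^ 2 = 0 ->
  is_derive (fun s => I1 k1 k2 b1 b2 b3 E0 (x s) (y s) (Derive x s) (Derive y s)) t
    (sqrt 2 * b1 * k1 * exp (sqrt 2 * (b2 - b1) * y t) * Derive y t
     * (f (x t) (y t) * Derive x t * Derive y t - E0)).
Proof.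
  intros hb12 hf hx hy hy' eqy.
  pose proof (is_derive_weight_comp x y t hx hy) as hW.
  pose proof (is_derive_pow _ 2 _ _ (Derive_correct _ _ hy')) as hY.
  assert (hE : is_derive (fun s => k1 * b1 * E0 / (b1 - b2) * exp (sqrt 2 * (b2 - b1) * y s)) t
     (k1 * b1 * E0 / (b1 - b2) * (sqrt 2 * (b2 - b1) * Derive y t) * exp (sqrt 2 * (b2 - b1) * y t))).
  { auto_derive; [exact hy |]. change (fun s => y s) with y. ring. }
  pose proof (is_derive_plus _ _ _ _ _ (is_derive_mult _ _ _ _ _ hW hY Rmult_comm) hE) as H.
  match type of H with is_derive _ _ ?d =>
    match goal with |- is_derive _ _ ?d' => replace d' with d; [exact H |] end end.
  assert (hY'' : Derive (Derive y) t
                 = - (f_y (x t) (y t) / f (x t) (y t) * Derive y t ^ 2)) by lra.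
  assert (hexp : exp (- (sqrt 2 * b1 * x t)) * exp (sqrt 2 * (b1 * x t + (b2 - b1) * y t))
                 = exp (sqrt 2 * (b2 - b1) * y t)).
  { rewrite <- exp_plus. f_equal. ring. }
  rewrite fmet_x_sub, hY'', <- hexp. unfold plus, mult; simpl.
  field. split; [lra | exact hf].
Qed.

End Metric.

Theorem mainTheorem10 (k1 k2 b1 b2 b3 E0 : R)
  (hk1 : k1 <> 0) (hk2 : k2 <> 0) (hb1 : b1 <> 0) (hb2 : b2 <> 0)
  (hb3 : b3 <> 0) (hb12 : b1 <> b2) (hE0 : E0 <> 0)
  (a b : R) (x y : R -> R)
  (hdx : forall t, a < t < b -> ex_derive x t /\ ex_derive (Derive x) t)
  (hdy : forall t, a < t < b -> ex_derive y t /\ ex_derive (Derive y) t)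
  (hf : forall t, a < t < b -> fmet k1 k2 b1 b2 b3 (x t) (y t) <> 0)
  (eqx : forall t, a < t < b ->
     Derive (Derive x) t
     + fmet_x k1 k2 b1 b2 b3 (x t) (y t) / fmet k1 k2 b1 b2 b3 (x t) (y t)
       * (Derive x t) ^ 2 = 0)
  (eqy : forall t, a < t < b ->
     Derive (Derive y) t
     + fmet_y k1 k2 b1 b2 b3 (x t) (y t) / fmet k1 k2 b1 b2 b3 (x t) (y t)
       * (Derive y t) ^ 2 = 0)
  (constr : forall t, a < t < b ->
     fmet k1 k2 b1 b2 b3 (x t) (y t) * Derive x t * Derive y t = E0) :
  forall t, a < t < b ->
    is_derive (fun s => I1 k1 k2 b1 b2 b3 E0 (x s) (y s) (Derive x s) (Derive y s)) t 0.
Proof.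
  intros t ht.
  destruct (hdx t ht) as [hx _]. destruct (hdy t ht) as [hy hy'].
  pose proof (is_derive_I1_comp k1 k2 b1 b2 b3 E0 x y t
                hb12 (hf t ht) hx hy hy' (eqy t ht)) as H.
  rewrite constr, Rminus_diag, Rmult_0_r in H by exact ht.
  exact H.
Qed.
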